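(* Let $p$ be an odd prime and $k$ a positive integer. Then $v_p(g_{k,U})=\sum_{\ell=1}^\infty\Big(\Big[\frac{k^2}{p^\ell}\Big]+(2k-p^\ell)\Big[\frac{k-1}{p^\ell}\Big]+\Big(\frac{p^\ell}{2}-2k\Big)\Big[\frac{2k-1}{p^\ell}\Big]-p^\ell\Big[\frac{k-1}{p^\ell}\Big]^2+\frac{p^\ell}{2}\Big[\frac{2k-1}{p^\ell}\Big]^2\Big)$ and $v_p(g_{k,O})=\sum_{\ell=1}^\infty\Big(\Big[\frac{\frac12k(k-1)}{p^\ell}\Big]-\big(k-\tfrac12\big)\Big[\frac{2k-3}{p^\ell}\Big]_2+\frac{p^\ell}{2}\Big[\frac{2k-3}{p^\ell}\Big]_2^2\Big)$.
   Context: $v_p(n)$ is the exponent of $p$ in the rational number $n$; $[x]$ is the floor of $x$; $[x]_2=\big[\tfrac12([x]+1)\big]$. Let $B_U(\lambda)=\lambda^2$, $B_O(\lambda)=\tfrac12\lambda(\lambda-1)$. Define $G_U(\lambda)=\lim_{N\to\infty}N^{-\lambda^2}\prod_{j=1}^{N}\frac{\Gamma(j)\Gamma(j+2\lambda)}{\Gamma(j+\lambda)^2}$, $G_O(\lambda)=\tfrac12\lim_{N\to\infty}N^{-\lambda(\lambda-1)/2}\,2^{2N\lambda}\prod_{j=1}^{N}\frac{\Gamma(N+j-1)\Gamma(j-\frac12+\lambda)}{\Gamma(N+j-1+\lambda)\Gamma(j-\frac12)}$, and $g_{\lambda,X}=\Gamma(1+B_X(\lambda))G_X(\lambda)$ for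 $X\in\{U,O\}$. *)

From Stdlib Require Import Reals ZArith Znumtheory.
From Coquelicot Require Import Coquelicot.
Open Scope R_scope.

Fixpoint prodR (f : nat -> R) (n : nat) : R :=
  match n with O => 1 | S m => prodR f m * f m end.

(* Euler's Gamma function, via Gauss' product formula
   Gamma(x) = lim_n n! n^x / (x (x+1) ... (x+n))   (x not a nonpositive integer). *)
Definition Gamma (x : R) : R :=
  real (Lim_seq (fun n => INR (fact n) * Rpower (INR n) x
                           / prodR (fun i => x + INR i) (S n))).

Definition B_U (l : R) : R := l ^ 2.
Definition B_O (l : R) : R := / 2 * l * (l - 1).

Definition G_U (l : R) : R :=
  real (Lim_seq (fun N => Rpower (INR N) (- (l ^ 2)) *
    prodR (fun i => let j := INR (S i) in
             Gamma j * Gamma (j + 2 * l) / (Gamma (j + l)) ^ 2) N)).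

Definition G_O (l : R) : R :=
  / 2 * real (Lim_seq (fun N => Rpower (INR N) (- (l * (l - 1) / 2)) *
    Rpower 2 (2 * INR N * l) *
    prodR (fun i => let j := INR (S i) in
             Gamma (INR N + j - 1) * Gamma (j - / 2 + l) /
             (Gamma (INR N + j - 1 + l) * Gamma (j - / 2))) N)).

Definition g_U (l : R) : R := Gamma (1 + B_U l) * G_U l.
Definition g_O (l : R) : R := Gamma (1 + B_O l) * G_O l.

(* p-adic valuation (as a relation): vp_is p x e  iff  x = p^e * a/b with
   a, b integers prime to p, i.e. x is a nonzero rational with v_p(x) = e. *)
Definition vp_is (p : nat) (x : R) (e : Z) : Prop :=
  exists a b : Z, (b <> 0)%Z /\ ~ (Z.of_nat p | a)%Z /\ ~ (Z.of_nat p | b)%Z /\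
    x = IZR a / IZR b * powerRZ (INR p) e.

(* floor [x]  (Int_part x = up x - 1 is the floor of x) *)
Definition fl (x : R) : Z := Int_part x.
Definition fl2 (x : R) : Z := fl (/ 2 * (IZR (fl x) + 1)).

Definition termU (p k l : nat) : R :=
  let q := INR p ^ l in let K := INR k in
  IZR (fl (K ^ 2 / q)) + (2 * K - q) * IZR (fl ((K - 1) / q))
  + (q / 2 - 2 * K) * IZR (fl ((2 * K - 1) / q))
  - q * (IZR (fl ((K - 1) / q))) ^ 2
  + q / 2 * (IZR (fl ((2 * K - 1) / q))) ^ 2.

Definition termO (p k l : nat) : R :=
  let q := INR p ^ l in let K := INR k in
  IZR (fl ((/ 2 * K * (K - 1)) / q))
  - (K - / 2) * IZR (fl2 ((2 * K - 3) / q))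
  + q / 2 * (IZR (fl2 ((2 * K - 3) / q))) ^ 2.

(* For an integer [lambda = k], Gauss' product formula turns every Gamma value occurring
   in [G_U] and [G_O] into a factorial or a rising factorial at a half-integer.  The
   product defining [G_U] telescopes, giving [G_U(k) = prod_{i<k} i!/(i+k)!], and a
   finite form of the duplication formula gives
   [G_O(k) = 2^(k-1) prod_{m<k} 2^m m!/(2m)!].  Hence [g_U(k)] and [g_O(k)] are
   quotients of products of factorials and powers of 2, and for odd [p] Legendre's
   formula writes their valuations as sums over [l >= 1] of terms [[n/p^l]].  At level
   [q = p^l] the sums of [[i/q]] over ranges of [i] are evaluated by
   [sum_{i<n} [i/q] = c n - q c (c+1)/2] with [c = [(n-1)/q]]; in the orthogonal case
   Hermite's identity [[2i/q] = [i/q] + [(i+t)/q]] for [q = 2t+1] reduces to the same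
   sums.  This produces exactly the [l]-th summand, which vanishes for large [l]. *)

From Stdlib Require Import Reals ZArith Znumtheory Lia Lra.
From Coquelicot Require Import Coquelicot.
From mathcomp Require ssreflect ssrbool eqtype ssrnat div prime bigop binomial.
Open Scope R_scope.

Lemma prodR_ext (f g : nat -> R) n :
  (forall i, (i < n)%nat -> f i = g i) -> prodR f n = prodR g n.
Proof.
  induction n as [|n IH]; intros H; simpl; [reflexivity|].
  rewrite IH, H; [reflexivity|lia|intros; apply H; lia].
Qed.

Lemma prodR_mult (f g : nat -> R) n :
  prodR (fun i => f i * g i) n = prodR f n * prodR g n.
Proof. induction n as [|n IH]; simpl; [ring|rewrite IH; ring]. Qed.

Lemma prodR_inv (f : nat -> R) n : prodR (fun i => / f i) n = / prodR f n.
Proof.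
  induction n as [|n IH]; simpl; [now rewrite Rinv_1|now rewrite IH, Rinv_mult].
Qed.

Lemma prodR_div (f g : nat -> R) n :
  prodR (fun i => f i / g i) n = prodR f n / prodR g n.
Proof. unfold Rdiv; now rewrite prodR_mult, prodR_inv. Qed.

Lemma prodR_const c n : prodR (fun _ => c) n = c ^ n.
Proof. induction n as [|n IH]; simpl; [reflexivity|rewrite IH; ring]. Qed.

Lemma prodR_add (f : nat -> R) a b :
  prodR f (a + b) = prodR f a * prodR (fun i => f (a + i)%nat) b.
Proof.
  induction b as [|b IH]; simpl; [now rewrite Nat.add_0_r, Rmult_1_r|].
  rewrite Nat.add_succ_r; simpl; rewrite IH; ring.
Qed.

Lemma prodR_exchange (f : nat -> nat -> R) m n :
  prodR (fun i => prodR (f i) n) m = prodR (fun j => prodR (fun i => f i j) m) n.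
Proof.
  induction m as [|m IH]; simpl.
  - now rewrite prodR_const, pow1.
  - now rewrite IH, <- prodR_mult.
Qed.

Lemma prodR_gt0 (f : nat -> R) n :
  (forall i, (i < n)%nat -> 0 < f i) -> 0 < prodR f n.
Proof.
  induction n as [|n IH]; intros H; simpl; [lra|].
  apply Rmult_lt_0_compat; [apply IH; intros; apply H|apply H]; lia.
Qed.

Lemma prodR_telescope (f : nat -> R) k N :
  (forall i, f i <> 0) ->
  prodR (fun i => f (i + k)%nat / f i) N = prodR (fun i => f (N + i)%nat) k / prodR f k.
Proof.
  intros Hf.
  assert (Hprod : forall n, prodR f n <> 0).
  { induction n as [|n IH]; simpl; [lra|now apply Rmult_integral_contrapositive]. }
  assert (E := prodR_add f k N); rewrite Nat.add_comm, prodR_add in E.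
  rewrite prodR_div.
  rewrite (prodR_ext (fun i => f (i + k)%nat) (fun i => f (k + i)%nat))
    by (intros; now rewrite Nat.add_comm).
  replace (prodR (fun i => f (k + i)%nat) N)
    with (prodR f N * prodR (fun i => f (N + i)%nat) k / prodR f k)
    by (rewrite E; field; auto).
  field; auto.
Qed.

Lemma is_lim_seq_prodR (u : nat -> nat -> R) (l : nat -> R) n :
  (forall i, (i < n)%nat -> is_lim_seq (u i) (l i)) ->
  is_lim_seq (fun N => prodR (fun i => u i N) n) (prodR l n).
Proof.
  induction n as [|n IH]; intros H; simpl; [apply is_lim_seq_const|].
  apply is_lim_seq_mult'; [apply IH; intros; apply H|apply H]; lia.
Qed.

Fixpoint sumN (f : nat -> nat) (n : nat) : nat :=
  match n with O => O | S m => (sumN f m + f m)%nat end.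

Fixpoint prodN (f : nat -> nat) (n : nat) : nat :=
  match n with O => 1%nat | S m => (prodN f m * f m)%nat end.

Lemma sumN_ext f g n : (forall i, (i < n)%nat -> f i = g i) -> sumN f n = sumN g n.
Proof.
  induction n as [|n IH]; intros H; simpl; [reflexivity|].
  rewrite IH, H; [reflexivity|lia|intros; apply H; lia].
Qed.

Lemma sumN_add f g n : sumN (fun i => f i + g i)%nat n = (sumN f n + sumN g n)%nat.
Proof. induction n as [|n IH]; simpl; [reflexivity|rewrite IH; lia]. Qed.

Lemma sumN_split f a b : sumN f (a + b) = (sumN f a + sumN (fun i => f (a + i)%nat) b)%nat.
Proof.
  induction b as [|b IH]; simpl; [rewrite Nat.add_0_r; lia|].
  rewrite Nat.add_succ_r; simpl; rewrite IH; lia.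
Qed.

Lemma sumN_exchange (f : nat -> nat -> nat) m n :
  sumN (fun i => sumN (f i) n) m = sumN (fun j => sumN (fun i => f i j) m) n.
Proof.
  induction m as [|m IH]; simpl.
  - induction n as [|n IHn]; simpl; lia.
  - now rewrite IH, <- sumN_add.
Qed.

Lemma sumN_eq0 f n : (forall i, (i < n)%nat -> f i = 0%nat) -> sumN f n = 0%nat.
Proof.
  intros H; rewrite (sumN_ext f (fun _ => 0%nat)) by exact H; clear H.
  induction n as [|n IH]; simpl; lia.
Qed.

Lemma sumN_eventually_const f L n :
  (forall i, (L <= i)%nat -> f i = 0%nat) -> (L <= n)%nat -> sumN f n = sumN f L.
Proof.
  intros H; induction 1 as [|n Hn IH]; simpl; [reflexivity|].
  rewrite IH, H by exact Hn; lia.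
Qed.

Lemma prodN_gt0 f n : (forall i, 0 < f i)%nat -> (0 < prodN f n)%nat.
Proof. intros Hf; induction n as [|n IH]; simpl; [lia|specialize (Hf n); nia]. Qed.

Lemma INR_prodN f n : INR (prodN f n) = prodR (fun i => INR (f i)) n.
Proof. induction n as [|n IH]; simpl; [reflexivity|now rewrite mult_INR, IH]. Qed.

Lemma pow_sumN x f n : x ^ sumN f n = prodR (fun i => x ^ f i) n.
Proof. induction n as [|n IH]; simpl; [reflexivity|now rewrite pow_add, IH]. Qed.

Definition tri (k : nat) : nat := sumN (fun i => i) k.

Lemma INR_tri k : INR (tri k) = INR k * (INR k - 1) / 2.
Proof.
  induction k as [|k IH]; unfold tri in *; simpl sumN; [simpl; field|].
  rewrite plus_INR, IH, S_INR; field.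
Qed.

Definition rising (x : R) (n : nat) : R := prodR (fun i => x + INR i) n.

Lemma rising_S x n : rising x (S n) = rising x n * (x + INR n).
Proof. reflexivity. Qed.

Lemma rising_gt0 x n : 0 < x -> 0 < rising x n.
Proof. intros Hx; apply prodR_gt0; intros i _; generalize (pos_INR i); lra. Qed.

Lemma rising_add x a b : rising x (a + b) = rising x a * rising (x + INR a) b.
Proof.
  unfold rising; rewrite prodR_add; f_equal.
  apply prodR_ext; intros; rewrite plus_INR; ring.
Qed.

Lemma rising_one x : rising x 1 = x.
Proof. unfold rising; simpl; ring. Qed.

Lemma rising_shift x n : rising (x + 1) n * x = rising x n * (x + INR n).
Proof.
  rewrite <- rising_S, <- Nat.add_1_l, rising_add, rising_one; simpl; ring.
Qed.

Lemma rising_1 n : rising 1 n = INR (fact n).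
Proof.
  induction n as [|n IH]; [reflexivity|].
  rewrite rising_S, IH, fact_simpl, mult_INR, S_INR; ring.
Qed.

Lemma fact_add n a : INR (fact (a + n)) = INR (fact a) * rising (INR a + 1) n.
Proof.
  now rewrite <- !rising_1, rising_add, Rplus_comm.
Qed.

Lemma rising_fact a n : rising (INR a + 1) n = INR (fact (a + n)) / INR (fact a).
Proof. rewrite fact_add; field; apply not_0_INR, fact_neq_0. Qed.

Lemma prodR_rising_exchange x N k :
  prodR (fun i => rising (x + INR i) k) N = prodR (fun m => rising (x + INR m) N) k.
Proof.
  unfold rising; rewrite prodR_exchange.
  apply prodR_ext; intros; apply prodR_ext; intros; ring.
Qed.

(** * Gauss' product for Gamma *)

Lemma is_lim_seq_inv_INR : is_lim_seq (fun n => / INR n) 0.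
Proof. exact (is_lim_seq_inv INR p_infty is_lim_seq_INR ltac:(discriminate)). Qed.

Lemma is_lim_seq_affine_div a b : is_lim_seq (fun N => (a * INR N + b) / INR N) a.
Proof.
  apply is_lim_seq_ext_loc with (fun N => a + b * / INR N).
  - exists 1%nat; intros N HN.
    assert (0 < INR N) by (apply lt_0_INR; lia). field; lra.
  - assert (H := is_lim_seq_plus' _ _ a (b * 0) (is_lim_seq_const a)
                   (is_lim_seq_scal_l _ b 0 is_lim_seq_inv_INR)).
    now rewrite Rmult_0_r, Rplus_0_r in H.
Qed.

Lemma is_lim_seq_div_affine a : 0 <= a -> is_lim_seq (fun N => INR N / (INR N + a)) 1.
Proof.
  intros Ha; apply is_lim_seq_ext_loc with (fun N => / ((1 * INR N + a) / INR N)).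
  - exists 1%nat; intros N HN.
    assert (0 < INR N) by (apply lt_0_INR; lia). field; lra.
  - assert (H := is_lim_seq_inv _ 1 (is_lim_seq_affine_div 1 a) ltac:(injection; lra)).
    simpl in H; now rewrite Rinv_1 in H.
Qed.

Lemma is_lim_seq_rising_div a c n :
  is_lim_seq (fun N => rising (a * INR N + c) n / INR N ^ n) (a ^ n).
Proof.
  apply is_lim_seq_ext with
    (fun N => prodR (fun i => (a * INR N + (c + INR i)) / INR N) n).
  - intros N; unfold rising; rewrite prodR_div, prodR_const.
    f_equal; apply prodR_ext; intros; ring.
  - rewrite <- prodR_const; apply is_lim_seq_prodR; intros.
    apply is_lim_seq_affine_div.
Qed.

Definition gamma_seq (x : R) (n : nat) : R :=
  INR (fact n) * Rpower (INR n) x / rising x (S n).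

Lemma Gamma_lim (x g : R) : is_lim_seq (gamma_seq x) g -> Gamma x = g.
Proof.
  intros H; unfold Gamma; unfold gamma_seq, rising in H.
  now rewrite (is_lim_seq_unique _ _ H).
Qed.

Lemma is_lim_gamma_seq_S (x g : R) :
  0 < x -> is_lim_seq (gamma_seq x) g -> is_lim_seq (gamma_seq (x + 1)) (x * g).
Proof.
  intros Hx Hg.
  apply is_lim_seq_ext_loc with
    (fun n => x * gamma_seq x n * (INR n / (INR n + (x + 1)))).
  - exists 1%nat; intros n Hn.
    assert (Hn0 : 0 < INR n) by (apply lt_0_INR; lia).
    assert (Hr := rising_gt0 x (S n) Hx).
    assert (E := rising_shift x (S n)); rewrite S_INR in E.
    unfold gamma_seq; rewrite Rpower_plus, Rpower_1 by exact Hn0.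
    replace (rising (x + 1) (S n)) with (rising x (S n) * (x + (INR n + 1)) / x)
      by (rewrite <- E; field; lra).
    field; lra.
  - rewrite <- (Rmult_1_r (x * g)).
    apply is_lim_seq_mult'; [apply is_lim_seq_mult'; [apply is_lim_seq_const|exact Hg]|].
    apply is_lim_seq_div_affine; lra.
Qed.

Lemma is_lim_gamma_seq_add_nat (x g : R) n :
  0 < x -> is_lim_seq (gamma_seq x) g ->
  is_lim_seq (gamma_seq (x + INR n)) (g * rising x n).
Proof.
  intros Hx Hg; induction n as [|n IH].
  - simpl; rewrite Rplus_0_r, Rmult_1_r; exact Hg.
  - rewrite S_INR, <- Rplus_assoc, rising_S.
    replace (g * (rising x n * (x + INR n))) with ((x + INR n) * (g * rising x n))
      by ring.
    apply is_lim_gamma_seq_S; [generalize (pos_INR n); lra|exact IH].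
Qed.

Lemma Gamma_add_nat (x g : R) n :
  0 < x -> is_lim_seq (gamma_seq x) g -> Gamma (x + INR n) = g * rising x n.
Proof. intros Hx Hg; now apply Gamma_lim, is_lim_gamma_seq_add_nat. Qed.

Lemma is_lim_gamma_seq_1 : is_lim_seq (gamma_seq 1) 1.
Proof.
  apply is_lim_seq_ext_loc with (fun n => INR n / (INR n + 1)).
  - exists 1%nat; intros n Hn.
    assert (0 < INR n) by (apply lt_0_INR; lia).
    assert (0 < INR (fact n)) by apply (lt_0_INR _ (lt_O_fact n)).
    unfold gamma_seq; rewrite Rpower_1, rising_1, fact_simpl, mult_INR, S_INR by lra.
    field; lra.
  - apply is_lim_seq_div_affine; lra.
Qed.

Lemma Gamma_nat n : Gamma (1 + INR n) = INR (fact n).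
Proof.
  rewrite (Gamma_add_nat 1 1 n Rlt_0_1 is_lim_gamma_seq_1), rising_1; ring.
Qed.

Lemma mul_sqrt_le a b c d :
  0 <= a -> 0 <= b -> 0 <= c -> 0 <= d -> a * a * b <= c * c * d ->
  a * sqrt b <= c * sqrt d.
Proof.
  intros Ha Hb Hc Hd H.
  rewrite <- (sqrt_square a), <- (sqrt_square c), <- !sqrt_mult_alt by nra.
  now apply sqrt_le_1_alt.
Qed.

Lemma div_le_cross F A B P Q :
  0 <= F -> 0 < P -> 0 < Q -> A * Q <= B * P -> F * A / P <= F * B / Q.
Proof.
  intros HF HP HQ H; unfold Rdiv; rewrite !Rmult_assoc.
  apply Rmult_le_compat_l; [exact HF|].
  apply (Rmult_le_reg_r (P * Q)); [nra|].
  replace (A * / P * (P * Q)) with (A * Q) by (field; lra).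
  replace (B * / Q * (P * Q)) with (B * P) by (field; lra).
  exact H.
Qed.

(* [gamma_seq (/2)] is increasing and bounded above by the decreasing
   sequence [half_upper], whose first term is [2]. *)
Definition half_upper (n : nat) : R :=
  INR (fact n) * sqrt (INR n + 1) / rising (/2) (S n).

Lemma gamma_seq_half n :
  gamma_seq (/2) (S n) = INR (fact (S n)) * sqrt (INR n + 1) / rising (/2) (S (S n)).
Proof.
  unfold gamma_seq; rewrite Rpower_sqrt, S_INR; [reflexivity|].
  apply lt_0_INR; lia.
Qed.

Lemma gamma_seq_half_incr n : gamma_seq (/2) (S n) <= gamma_seq (/2) (S (S n)).
Proof.
  rewrite !gamma_seq_half, (fact_simpl (S n)), mult_INR, (rising_S _ (S (S n))).
  assert (Hy := pos_INR n); rewrite !S_INR.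
  assert (HR := rising_gt0 (/2) (S (S n)) ltac:(lra)).
  set (R2 := rising (/2) (S (S n))) in *.
  replace ((INR n + 1 + 1) * INR (fact (S n)) * sqrt (INR n + 1 + 1))
    with (INR (fact (S n)) * ((INR n + 1 + 1) * sqrt (INR n + 1 + 1))) by ring.
  assert (Hkey : (/ 2 + (INR n + 1 + 1)) * sqrt (INR n + 1)
                 <= (INR n + 1 + 1) * sqrt (INR n + 1 + 1)) by (apply mul_sqrt_le; nra).
  apply div_le_cross; [apply pos_INR|exact HR|nra|nra].
Qed.

Lemma half_upper_decr n : half_upper (S n) <= half_upper n.
Proof.
  unfold half_upper; rewrite fact_simpl, mult_INR, (rising_S _ (S n)).
  assert (Hy := pos_INR n); rewrite !S_INR.
  assert (HR := rising_gt0 (/2) (S n) ltac:(lra)).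
  set (R1 := rising (/2) (S n)) in *.
  assert (Hkey : (INR n + 1) * sqrt (INR n + 1 + 1)
                 <= (/ 2 + (INR n + 1)) * sqrt (INR n + 1)) by (apply mul_sqrt_le; nra).
  replace ((INR n + 1) * INR (fact n) * sqrt (INR n + 1 + 1))
    with (INR (fact n) * ((INR n + 1) * sqrt (INR n + 1 + 1))) by ring.
  apply div_le_cross; [apply pos_INR|nra|exact HR|nra].
Qed.

Lemma half_upper_le_2 n : half_upper n <= 2.
Proof.
  induction n as [|n IH].
  - unfold half_upper, rising; simpl; rewrite Rplus_0_l, sqrt_1; lra.
  - eapply Rle_trans; [apply half_upper_decr|exact IH].
Qed.

Lemma gamma_seq_half_le_upper n : gamma_seq (/2) (S n) <= half_upper (S n).
Proof.
  rewrite gamma_seq_half; unfold half_upper, Rdiv.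
  apply Rmult_le_compat_r; [apply Rlt_le, Rinv_0_lt_compat, rising_gt0; lra|].
  apply Rmult_le_compat_l; [apply pos_INR|].
  apply sqrt_le_1_alt; rewrite S_INR; lra.
Qed.

Lemma is_lim_gamma_seq_half : exists g, 0 < g /\ is_lim_seq (gamma_seq (/2)) g.
Proof.
  set (u n := gamma_seq (/2) (S n)).
  assert (Hincr : forall n, u n <= u (S n)) by apply gamma_seq_half_incr.
  destruct (ex_finite_lim_seq_incr u 2 Hincr) as [g Hg].
  { intros n; eapply Rle_trans; [apply gamma_seq_half_le_upper|apply half_upper_le_2]. }
  exists g; split; [|now apply is_lim_seq_incr_1].
  assert (Hu0 : forall n, u O <= u n).
  { induction n as [|n IH]; [lra|eapply Rle_trans; [exact IH|apply Hincr]]. }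
  assert (Hle := is_lim_seq_le _ _ (u O) g Hu0 (is_lim_seq_const _) Hg); simpl in Hle.
  eapply Rlt_le_trans; [|exact Hle].
  unfold u; rewrite gamma_seq_half; unfold rising; simpl.
  rewrite Rplus_0_l, sqrt_1; lra.
Qed.

Lemma Gamma_half_add_nat :
  exists g, 0 < g /\ forall n, Gamma (/2 + INR n) = g * rising (/2) n.
Proof.
  destruct is_lim_gamma_seq_half as [g [Hg Hlim]].
  exists g; split; [exact Hg|].
  intros n; apply Gamma_add_nat; [lra|exact Hlim].
Qed.

(** * The constants g_U and g_O *)

Lemma G_U_factor k i :
  Gamma (INR (S i)) * Gamma (INR (S i) + 2 * INR k) / Gamma (INR (S i) + INR k) ^ 2
  = rising (INR (i + k) + 1) k / rising (INR i + 1) k.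
Proof.
  replace (INR (S i) + 2 * INR k) with (1 + INR (i + k + k))
    by (rewrite S_INR, !plus_INR; ring).
  replace (INR (S i) + INR k) with (1 + INR (i + k)) by (rewrite S_INR, plus_INR; ring).
  replace (INR (S i)) with (1 + INR i) by (rewrite S_INR; ring).
  rewrite !Gamma_nat, (fact_add k (i + k)), (fact_add k i).
  assert (0 < INR (fact i)) by apply (lt_0_INR _ (lt_O_fact i)).
  assert (0 < rising (INR i + 1) k) by (apply rising_gt0; generalize (pos_INR i); lra).
  field; lra.
Qed.

Lemma is_lim_G_U k :
  is_lim_seq (fun N => Rpower (INR N) (- (INR k ^ 2)) *
    prodR (fun i => Gamma (INR (S i)) * Gamma (INR (S i) + 2 * INR k) /
                    Gamma (INR (S i) + INR k) ^ 2) N)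
  (/ prodR (fun i => rising (INR i + 1) k) k).
Proof.
  set (f a := rising (INR a + 1) k).
  assert (Hf : forall a, 0 < f a) by (intros; apply rising_gt0; generalize (pos_INR a); lra).
  apply is_lim_seq_ext_loc with
    (fun N => / prodR f k * prodR (fun i => rising (1 * INR N + (INR i + 1)) k / INR N ^ k) k).
  - exists 1%nat; intros N HN.
    assert (HN0 : 0 < INR N) by (apply lt_0_INR; lia).
    rewrite (prodR_ext _ (fun i => f (i + k)%nat / f i) N) by (intros; apply G_U_factor).
    rewrite prodR_telescope by (intros; apply Rgt_not_eq, Hf).
    assert (Hpow : Rpower (INR N) (- (INR k ^ 2)) = / prodR (fun _ => INR N ^ k) k).
    { replace (INR k ^ 2) with (INR (k * k)) by (rewrite mult_INR; ring).
      now rewrite Rpower_Ropp, Rpower_pow, prodR_const, pow_mult. }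
    rewrite Hpow, prodR_div.
    rewrite (prodR_ext (fun i => rising (1 * INR N + (INR i + 1)) k) (fun i => f (N + i)%nat))
      by (intros; unfold f; f_equal; rewrite plus_INR; ring).
    assert (0 < prodR f k) by (apply prodR_gt0; auto).
    assert (0 < prodR (fun _ => INR N ^ k) k) by (apply prodR_gt0; intros; now apply pow_lt).
    field; lra.
  - assert (H := is_lim_seq_prodR _ (fun _ => 1 ^ k) k
                   (fun i _ => is_lim_seq_rising_div 1 (INR i + 1) k)).
    rewrite prodR_const, !pow1 in H.
    assert (H1 := is_lim_seq_mult' _ _ _ _ (is_lim_seq_const (/ prodR f k)) H).
    now rewrite Rmult_1_r in H1.
Qed.

Lemma G_U_value k : G_U (INR k) = / prodR (fun i => rising (INR i + 1) k) k.
Proof. unfold G_U; now rewrite (is_lim_seq_unique _ _ (is_lim_G_U k)). Qed.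

Lemma G_O_factor k N i : (1 <= N)%nat ->
  Gamma (INR N + INR (S i) - 1) * Gamma (INR (S i) - / 2 + INR k) /
  (Gamma (INR N + INR (S i) - 1 + INR k) * Gamma (INR (S i) - / 2))
  = rising (/2 + INR i) k / rising (INR N + INR i) k.
Proof.
  intros HN; destruct Gamma_half_add_nat as [g [Hg HG]].
  replace (INR (S i) - /2 + INR k) with (/2 + INR (i + k))
    by (rewrite S_INR, plus_INR; field).
  replace (INR (S i) - /2) with (/2 + INR i) by (rewrite S_INR; field).
  replace (INR N + INR (S i) - 1 + INR k) with (1 + INR (N - 1 + i + k))
    by (rewrite S_INR, !plus_INR, minus_INR by lia; simpl; ring).
  replace (INR N + INR (S i) - 1) with (1 + INR (N - 1 + i))
    by (rewrite S_INR, plus_INR, minus_INR by lia; simpl; ring).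
  rewrite !HG, !Gamma_nat, (fact_add k (N - 1 + i)), (rising_add (/2) i k).
  replace (INR (N - 1 + i) + 1) with (INR N + INR i)
    by (rewrite plus_INR, minus_INR by lia; simpl; ring).
  assert (0 < INR N) by (apply lt_0_INR; lia).
  assert (0 < INR (fact (N - 1 + i))) by apply (lt_0_INR _ (lt_O_fact _)).
  assert (0 < rising (/2) i) by (apply rising_gt0; lra).
  assert (0 < rising (/2 + INR i) k) by (apply rising_gt0; generalize (pos_INR i); lra).
  assert (0 < rising (INR N + INR i) k) by (apply rising_gt0; generalize (pos_INR i); lra).
  field; repeat split; apply Rgt_not_eq; try apply Rmult_lt_0_compat; assumption.
Qed.

(* Finite counterpart of Legendre's duplication formula for Gamma. *)
Lemma rising_half_ratio m N : (1 <= N)%nat ->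
  4 ^ N * rising (/2 + INR m) N / rising (INR N + INR m) N
  = 2 / rising (INR m + 1) m * rising (2 * INR N + INR m) m.
Proof.
  assert (Hm := pos_INR m).
  assert (Hr : 0 < rising (INR m + 1) m) by (apply rising_gt0; lra).
  induction 1 as [|N HN IH].
  - assert (E := rising_shift (INR m + 1) m).
    replace (2 * INR 1 + INR m) with (INR m + 1 + 1) by (simpl; ring).
    replace (rising (INR m + 1 + 1) m)
      with (rising (INR m + 1) m * (INR m + 1 + INR m) / (INR m + 1))
      by (rewrite <- E; field; lra).
    rewrite !rising_one; simpl; field; lra.
  - assert (HN0 : 1 <= INR N) by (apply (le_INR 1); exact HN).
    set (y := INR N + INR m) in *; set (z := 2 * INR N + INR m) in *.
    assert (Ey := rising_shift y (S N)); rewrite (rising_S y N), S_INR in Ey.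
    assert (Ez1 := rising_shift (z + 1) m); assert (Ez := rising_shift z m).
    replace (INR (S N) + INR m) with (y + 1) by (unfold y; rewrite S_INR; ring).
    replace (2 * INR (S N) + INR m) with (z + 1 + 1) by (unfold z; rewrite S_INR; ring).
    assert (Hy : 0 < rising y N) by (apply rising_gt0; unfold y; lra).
    assert (Hz : 0 < rising z m) by (apply rising_gt0; unfold z; lra).
    replace (rising (y + 1) (S N)) with (rising y N * (y + INR N) * (y + (INR N + 1)) / y)
      by (rewrite <- Ey; field; unfold y; lra).
    assert (Hz0 : 0 < z) by (unfold z; lra).
    replace (rising (z + 1 + 1) m)
      with (rising z m * (z + INR m) * (z + 1 + INR m) / (z * (z + 1))).
    2:{ apply (Rmult_eq_reg_r ((z + 1) * z)); [|nra].
        transitivity (rising (z + 1 + 1) m * (z + 1) * z); [|ring].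
        rewrite Ez1.
        transitivity (rising (z + 1) m * z * (z + 1 + INR m)); [|ring].
        rewrite Ez; field; lra. }
    rewrite rising_S; change (4 ^ S N) with (4 * 4 ^ N).
    transitivity (4 ^ N * rising (/ 2 + INR m) N / rising y N
                  * (4 * (/ 2 + INR m + INR N) * y / ((y + INR N) * (y + (INR N + 1))))).
    + assert (0 < y) by (unfold y; lra).
      field; repeat split; lra.
    + rewrite IH; unfold y, z; field; lra.
Qed.

Lemma is_lim_G_O k :
  is_lim_seq (fun N => Rpower (INR N) (- (INR k * (INR k - 1) / 2)) *
    Rpower 2 (2 * INR N * INR k) *
    prodR (fun i => Gamma (INR N + INR (S i) - 1) * Gamma (INR (S i) - / 2 + INR k) /
                    (Gamma (INR N + INR (S i) - 1 + INR k) * Gamma (INR (S i) - / 2))) N)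
  (prodR (fun m => 2 / rising (INR m + 1) m * 2 ^ m) k).
Proof.
  apply is_lim_seq_ext_loc with (fun N =>
    prodR (fun m => 2 / rising (INR m + 1) m * (rising (2 * INR N + INR m) m / INR N ^ m)) k).
  - exists 1%nat; intros N HN.
    assert (HN0 : 0 < INR N) by (apply lt_0_INR; lia).
    rewrite (prodR_ext _ (fun i => rising (/2 + INR i) k / rising (INR N + INR i) k) N)
      by (intros; now apply G_O_factor).
    rewrite prodR_div, (prodR_rising_exchange (/2)), (prodR_rising_exchange (INR N)).
    rewrite <- prodR_div.
    rewrite <- INR_tri, Rpower_Ropp, Rpower_pow by exact HN0.
    unfold tri; rewrite pow_sumN.
    replace (2 * INR N * INR k) with (INR (2 * N * k)) by (rewrite !mult_INR; reflexivity).
    rewrite Rpower_pow, !pow_mult, <- prodR_const, <- prodR_inv, <- !prodR_mult by lra.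
    apply prodR_ext; intros m _.
    assert (E := rising_half_ratio m N HN).
    assert (0 < rising (INR m + 1) m) by (apply rising_gt0; generalize (pos_INR m); lra).
    assert (0 < INR N ^ m) by (now apply pow_lt).
    replace ((2 ^ 2) ^ N) with (4 ^ N) by (f_equal; ring).
    transitivity ((4 ^ N * rising (/ 2 + INR m) N / rising (INR N + INR m) N) / INR N ^ m).
    + rewrite E; field; lra.
    + field; split; [apply Rgt_not_eq, rising_gt0; generalize (pos_INR m); lra|lra].
  - apply is_lim_seq_prodR; intros m _.
    apply is_lim_seq_mult'; [apply is_lim_seq_const|apply is_lim_seq_rising_div].
Qed.

Lemma G_O_value k : G_O (INR k) = / 2 * prodR (fun m => 2 / rising (INR m + 1) m * 2 ^ m) k.
Proof. unfold G_O; now rewrite (is_lim_seq_unique _ _ (is_lim_G_O k)). Qed.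

Definition num_U (k : nat) : nat := fact (k * k) * prodN (fun i => fact i) k.
Definition den_U (k : nat) : nat := prodN (fun i => fact (i + k)) k.
Definition num_O (k : nat) : nat := fact (tri k) * prodN (fun i => fact i) k * 2 ^ (tri k + k).
Definition den_O (k : nat) : nat := 2 * prodN (fun i => fact (2 * i)) k.

Lemma prodN_fact_gt0 (h : nat -> nat) n : (0 < prodN (fun i => fact (h i)) n)%nat.
Proof. apply prodN_gt0; intros; apply lt_O_fact. Qed.

Lemma num_den_gt0 k : (0 < num_U k /\ 0 < den_U k /\ 0 < num_O k /\ 0 < den_O k)%nat.
Proof.
  assert (H1 : (0 < prodN (fun i => fact i) k)%nat) by apply (prodN_fact_gt0 (fun i => i)).
  assert (H2 : (0 < prodN (fun i => fact (2 * i)) k)%nat)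
    by apply (prodN_fact_gt0 (fun i => 2 * i)%nat).
  assert (H3 := Nat.pow_nonzero 2 (tri k + k) ltac:(lia)).
  assert (H4 := lt_O_fact (k * k)); assert (H5 := lt_O_fact (tri k)).
  unfold num_U, den_U, num_O, den_O; repeat split;
    [nia|apply (prodN_fact_gt0 (fun i => i + k)%nat)|nia|lia].
Qed.

Lemma prodR_fact_gt0 (h : nat -> nat) n : 0 < prodR (fun i => INR (fact (h i))) n.
Proof. apply prodR_gt0; intros; apply (lt_0_INR _ (lt_O_fact _)). Qed.

Lemma g_U_value k : g_U (INR k) = INR (num_U k) / INR (den_U k).
Proof.
  unfold g_U, B_U, num_U, den_U.
  replace (1 + INR k ^ 2) with (1 + INR (k * k)) by (rewrite mult_INR; ring).
  rewrite Gamma_nat, G_U_value, mult_INR, !INR_prodN.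
  rewrite (prodR_ext _ (fun i => INR (fact (i + k)) / INR (fact i)) k)
    by (intros; apply rising_fact).
  rewrite prodR_div.
  assert (H1 := prodR_fact_gt0 (fun i => i) k).
  assert (H2 := prodR_fact_gt0 (fun i => i + k)%nat k).
  field; lra.
Qed.

Lemma g_O_value k : g_O (INR k) = INR (num_O k) / INR (den_O k).
Proof.
  unfold g_O, B_O, num_O, den_O.
  replace (1 + / 2 * INR k * (INR k - 1)) with (1 + INR (tri k)) by (rewrite INR_tri; field).
  rewrite Gamma_nat, G_O_value, !mult_INR, pow_INR, !INR_prodN.
  rewrite (prodR_ext _ (fun m => INR (fact m) * (2 * 2 ^ m) / INR (fact (2 * m))) k).
  2:{ intros m _; rewrite rising_fact; replace (m + m)%nat with (2 * m)%nat by lia.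
      assert (H := lt_0_INR _ (lt_O_fact m)).
      assert (H' := lt_0_INR _ (lt_O_fact (2 * m))).
      field; lra. }
  rewrite prodR_div, prodR_mult, prodR_mult, prodR_const, pow_add.
  unfold tri; rewrite pow_sumN.
  assert (H1 := prodR_fact_gt0 (fun m => 2 * m)%nat k).
  change (prodR (pow 2) k) with (prodR (fun i => 2 ^ i) k).
  replace (INR 2) with 2 by (simpl; ring); field; lra.
Qed.

(** * p-adic valuations *)

Lemma Zdivide_nat d a :
  (0 < a)%nat -> (Z.of_nat d | Z.of_nat a)%Z -> exists c, a = (c * d)%nat.
Proof.
  intros Ha [z Hz]; exists (Z.to_nat z).
  assert (0 <= z)%Z by nia. lia.
Qed.

Module Legendre.
Import ssreflect ssrbool eqtype ssrnat div prime bigop binomial.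
Local Open Scope nat_scope.

Lemma factorial_fact n : n`! = Factorial.fact n.
Proof. by elim: n => //= n IH; rewrite factS IH. Qed.

Lemma expn_pow m n : m ^ n = Nat.pow m n.
Proof. by elim: n => //= n IH; rewrite expnS IH. Qed.

Lemma divn_div m d : m %/ d = Nat.div m d.
Proof.
  case: d => [|d]; first by rewrite divn0.
  apply: (Nat.div_unique m d.+1 (m %/ d.+1) (m %% d.+1)).
  - by apply/ltP; rewrite ltn_mod.
  - by rewrite {1}(divn_eq m d.+1) mulnC.
Qed.

Lemma sumN_big f n : sumN f n = \sum_(0 <= i < n) f i.
Proof. by elim: n => [|n IH]; [rewrite big_geq|rewrite big_nat_recr //= IH]. Qed.

Lemma prime_of_Z p : Znumtheory.prime (Z.of_nat p) -> prime p.
Proof.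
  move=> Hp; have Hp2 := Znumtheory.prime_ge_2 _ Hp.
  apply/primeP; split; first by apply/ltP; lia.
  move=> d /dvdnP [c Hc].
  have Hd : (Z.of_nat d | Z.of_nat p)%Z by exists (Z.of_nat c); rewrite Hc Nat2Z.inj_mul.
  case: (Znumtheory.prime_divisors _ Hp _ Hd) => [H|[H|[H|H]]]; try lia.
  - by apply/orP; left; apply/eqP; lia.
  - by apply/orP; right; apply/eqP; lia.
Qed.

Lemma logn_fact_sumN p n L : Znumtheory.prime (Z.of_nat p) -> (n <= L)%coq_nat ->
  logn p (Factorial.fact n) = sumN (fun l => Nat.div n (Nat.pow p l.+1)) L.
Proof.
  move=> /prime_of_Z pp /leP nL.
  rewrite -factorial_fact logn_fact // sumN_big (big_cat_nat (leq0n n) nL).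
  rewrite [X in _ = _ + X]big1_seq ?addn0 ?big_add1.
  - by apply: eq_bigr => l _; rewrite divn_div expn_pow.
  - move=> l /andP[_]; rewrite mem_index_iota => /andP[nl _].
    rewrite -expn_pow -divn_div divn_small //.
    apply: leq_trans (ltn_expl n (prime_gt1 pp)) _.
    by rewrite leq_pexp2l ?prime_gt0 // (leq_trans nl).
Qed.

Lemma logn_mul p a b : (0 < a)%coq_nat -> (0 < b)%coq_nat ->
  logn p (Nat.mul a b) = Nat.add (logn p a) (logn p b).
Proof. by move=> /ltP Ha /ltP Hb; apply: lognM. Qed.

Lemma logn_prodN p f n : (forall i, (0 < f i)%coq_nat) ->
  logn p (prodN f n) = sumN (fun i => logn p (f i)) n.
Proof.
  move=> Hf; elim: n => [|n IH] /=; first by rewrite logn1.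
  rewrite logn_mul ?IH //; exact: prodN_gt0.
Qed.

Lemma logn_pow2 p e : Znumtheory.prime (Z.of_nat p) -> p <> 2 -> logn p (Nat.pow 2 e) = 0.
Proof.
  move=> /prime_of_Z pp p2.
  rewrite -expn_pow lognX logn_prime //.
  have -> : (p == 2) = false by apply/eqP.
  by rewrite muln0.
Qed.

Lemma logn_decomp p A : Znumtheory.prime (Z.of_nat p) -> (0 < A)%coq_nat ->
  exists a, A = Nat.mul a (Nat.pow p (logn p A)) /\ ~ (Z.of_nat p | Z.of_nat a)%Z.
Proof.
  move=> /prime_of_Z pp /ltP A_gt0.
  have [a a_coprime HA] := pfactor_coprime pp A_gt0.
  exists a; split; first by rewrite -expn_pow.
  have a_gt0 : 0 < a by move: A_gt0; rewrite HA muln_gt0 => /andP[].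
  move=> /(Zdivide_nat _ _ (elimT ltP a_gt0)) [c Hc].
  move: a_coprime; rewrite prime_coprime // => /negP; apply.
  by apply/dvdnP; exists c.
Qed.

End Legendre.

Lemma vp_is_ratio p A B : prime (Z.of_nat p) -> (0 < A)%nat -> (0 < B)%nat ->
  vp_is p (INR A / INR B) (Z.of_nat (prime.logn p A) - Z.of_nat (prime.logn p B)).
Proof.
  intros Hp HA HB.
  destruct (Legendre.logn_decomp p A Hp HA) as [a [Ea Na]].
  destruct (Legendre.logn_decomp p B Hp HB) as [b [Eb Nb]].
  assert (Hp0 : 0 < INR p) by (apply lt_0_INR; generalize (prime_ge_2 _ Hp); lia).
  assert (Hb : 0 < INR b) by (apply lt_0_INR; destruct b; [simpl in Eb; lia|lia]).
  exists (Z.of_nat a), (Z.of_nat b); repeat split; [lia|exact Na|exact Nb|].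
  rewrite <- !INR_IZR_INZ; unfold Z.sub.
  rewrite powerRZ_add, powerRZ_neg', <- !pow_powerRZ by lra.
  rewrite Ea at 1; rewrite Eb at 1; rewrite !mult_INR, !pow_INR.
  assert (0 < INR p ^ prime.logn p B) by (apply pow_lt; lra).
  field; lra.
Qed.

Lemma vp_is_of_series p A B x (a : nat -> R) :
  prime (Z.of_nat p) -> (0 < A)%nat -> (0 < B)%nat -> x = INR A / INR B ->
  is_series a (INR (prime.logn p A) - INR (prime.logn p B)) ->
  exists v, vp_is p x v /\ is_series a (IZR v).
Proof.
  intros Hp HA HB -> Ha; eexists; split; [now apply vp_is_ratio|].
  now rewrite minus_IZR, <- !INR_IZR_INZ.
Qed.

Lemma logn_prod_fact p h n L : prime (Z.of_nat p) ->
  (forall i, (i < n)%nat -> (h i <= L)%nat) ->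
  prime.logn p (prodN (fun i => fact (h i)) n)
  = sumN (fun l => sumN (fun i => h i / p ^ S l)%nat n) L.
Proof.
  intros Hp Hh.
  rewrite Legendre.logn_prodN by (intros; apply lt_O_fact).
  rewrite (sumN_ext _ (fun i => sumN (fun l => h i / p ^ S l)%nat L))
    by (intros; apply Legendre.logn_fact_sumN; auto).
  apply sumN_exchange.
Qed.

(** * Sums of floors *)

Definition floor_sum (q n : nat) : nat := sumN (fun i => i / q)%nat n.

Lemma div_mul_add q a r : (r < q)%nat -> ((a * q + r) / q = a)%nat.
Proof. intros H; rewrite Nat.div_add_l, Nat.div_small; lia. Qed.

Lemma floor_sum_block q a r : (r <= q)%nat ->
  floor_sum q (a * q + r) = (floor_sum q (a * q) + a * r)%nat.
Proof.
  intros Hr; unfold floor_sum; rewrite sumN_split; f_equal.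
  rewrite (sumN_ext _ (fun _ => a)) by (intros; apply div_mul_add; lia).
  induction r as [|r IH]; simpl; [lia|rewrite IH; lia].
Qed.

Lemma floor_sum_mul q a : (2 * floor_sum q (a * q) + q * a = q * a * a)%nat.
Proof.
  induction a as [|a IH]; [unfold floor_sum; simpl; lia|].
  replace (S a * q)%nat with (a * q + q)%nat by lia.
  rewrite floor_sum_block by lia; nia.
Qed.

(* [n - 1] is truncated, so for [n = 0] the quotient [(n - 1) / q] is [0]. *)
Lemma floor_sum_closed q n : (0 < q)%nat ->
  (2 * floor_sum q n + q * ((n - 1) / q) * ((n - 1) / q + 1)
   = 2 * ((n - 1) / q) * n)%nat.
Proof.
  intros Hq; destruct n as [|n]; [unfold floor_sum; simpl; rewrite Nat.Div0.div_0_l; lia|].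
  replace (S n - 1)%nat with n by lia.
  assert (Hn := Nat.div_mod_eq n q); assert (Hr := Nat.mod_upper_bound n q ltac:(lia)).
  set (c := (n / q)%nat) in *; set (r := (n mod q)%nat) in *.
  replace (S n) with (c * q + S r)%nat by lia.
  rewrite floor_sum_block by lia.
  assert (Hm := floor_sum_mul q c); nia.
Qed.

Lemma INR_floor_sum q n : (0 < q)%nat ->
  INR (floor_sum q n)
  = INR ((n - 1) / q) * INR n - INR q * INR ((n - 1) / q) * (INR ((n - 1) / q) + 1) / 2.
Proof.
  intros Hq; assert (H := floor_sum_closed q n Hq).
  apply (f_equal INR) in H; repeat rewrite ?plus_INR, ?mult_INR in H.
  simpl (INR 2) in H; simpl (INR 1) in H; lra.
Qed.

Lemma div_double_odd q t i : q = (2 * t + 1)%nat -> ((2 * i) / q = i / q + (i + t) / q)%nat.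
Proof.
  intros Hq; assert (Hi := Nat.div_mod_eq i q).
  assert (Hr := Nat.mod_upper_bound i q ltac:(lia)).
  set (u := (i / q)%nat) in *; set (r := (i mod q)%nat) in *.
  destruct (Nat.le_gt_cases r t) as [H|H].
  - replace (2 * i)%nat with (2 * u * q + 2 * r)%nat by lia.
    replace (i + t)%nat with (u * q + (r + t))%nat by lia.
    rewrite !div_mul_add; lia.
  - replace (2 * i)%nat with ((2 * u + 1) * q + (2 * r - q))%nat by lia.
    replace (i + t)%nat with ((u + 1) * q + (r + t - q))%nat by lia.
    rewrite !div_mul_add; lia.
Qed.

Lemma sumN_div_double_odd q t k : q = (2 * t + 1)%nat ->
  sumN (fun m => 2 * m / q)%nat k = (floor_sum q k + floor_sum q (k + t))%nat.
Proof.
  intros Hq; unfold floor_sum.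
  rewrite (sumN_ext _ (fun i => i / q + (i + t) / q)%nat)
    by (intros; now apply div_double_odd).
  rewrite sumN_add, (Nat.add_comm k t), sumN_split.
  rewrite (sumN_eq0 (fun i => i / q)%nat t) by (intros; apply Nat.div_small; lia).
  f_equal; apply sumN_ext; intros; f_equal; lia.
Qed.

Lemma fl_INR_div a q : (0 < q)%nat -> fl (INR a / INR q) = Z.of_nat (a / q).
Proof.
  intros Hq; symmetry; apply Int_part_spec; rewrite <- INR_IZR_INZ.
  assert (Hq' : 0 < INR q) by (apply lt_0_INR; lia).
  assert (Ha := Nat.div_mod_eq a q); assert (Hr := Nat.mod_upper_bound a q ltac:(lia)).
  assert (Hr' : INR (a mod q) + 1 <= INR q) by (rewrite <- S_INR; apply le_INR; lia).
  assert (Hr0 := pos_INR (a mod q)).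
  replace (INR a / INR q) with (INR (a / q) + INR (a mod q) / INR q)
    by (rewrite Ha at 3; rewrite plus_INR, mult_INR; field; lra).
  assert (INR (a mod q) / INR q < 1).
  { apply (Rmult_lt_reg_r (INR q)); [lra|].
    unfold Rdiv; rewrite Rmult_assoc, Rinv_l, Rmult_1_r by lra; lra. }
  assert (0 <= INR (a mod q) / INR q)
    by (apply Rmult_le_pos; [lra|apply Rlt_le, Rinv_0_lt_compat; lra]).
  lra.
Qed.

Lemma fl_neg_inv q : 1 < q -> fl (-1 / q) = (-1)%Z.
Proof.
  intros Hq; symmetry; apply Int_part_spec.
  assert (0 < / q < 1).
  { split; [apply Rinv_0_lt_compat; lra|rewrite <- Rinv_1; apply Rinv_lt_contravar; lra]. }
  unfold Rdiv; lra.
Qed.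

(* For odd [q = 2t + 1]: [[(2k - 3)/q]_2 = [(2k - 3 + q)/(2q)] = [(k + t - 1)/q]. *)
Lemma fl2_odd q t k : q = (2 * t + 1)%nat -> (1 <= t)%nat -> (1 <= k)%nat ->
  fl2 ((2 * INR k - 3) / INR q) = Z.of_nat ((k + t - 1) / q).
Proof.
  intros Hq Ht Hk; unfold fl2.
  destruct (Nat.eq_dec k 1) as [->|Hk1].
  - replace (2 * INR 1 - 3) with (-1) by (simpl; ring).
    rewrite fl_neg_inv by (apply (lt_INR 1); lia).
    replace (/ 2 * (IZR (-1) + 1)) with (INR 0 / INR 1) by (simpl; field).
    rewrite !fl_INR_div, !Nat.div_small by lia; reflexivity.
  - replace (2 * INR k - 3) with (INR (2 * k - 3))
      by (rewrite minus_INR, mult_INR by lia; simpl; ring).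
    rewrite fl_INR_div, <- INR_IZR_INZ by lia.
    replace (/ 2 * (INR ((2 * k - 3) / q) + 1)) with (INR ((2 * k - 3) / q + 1) / INR 2)
      by (rewrite plus_INR; simpl; field).
    rewrite fl_INR_div by lia; f_equal.
    rewrite <- (Nat.div_add (2 * k - 3) 1 q), Nat.Div0.div_div by lia.
    replace (2 * k - 3 + 1 * q)%nat with (2 * (k + t - 1))%nat by lia.
    rewrite (Nat.mul_comm q 2), Nat.Div0.div_mul_cancel_l; lia.
Qed.

Lemma termU_level p k l : (0 < p)%nat -> (1 <= k)%nat ->
  termU p k l = INR (k * k / p ^ l + floor_sum (p ^ l) k)%nat
                - INR (sumN (fun i => (i + k) / p ^ l)%nat k).
Proof.
  intros Hp Hk; unfold termU; cbv zeta; rewrite <- (pow_INR p l).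
  set (q := (p ^ l)%nat).
  assert (Hq : (0 < q)%nat) by (apply Nat.neq_0_lt_0, Nat.pow_nonzero; lia).
  assert (Hsplit : floor_sum q (k + k)
                   = (floor_sum q k + sumN (fun i => (i + k) / q)%nat k)%nat).
  { unfold floor_sum; rewrite sumN_split; f_equal; apply sumN_ext; intros; f_equal; lia. }
  replace (INR (sumN (fun i => (i + k) / q)%nat k))
    with (INR (floor_sum q (k + k)) - INR (floor_sum q k))
    by (rewrite Hsplit, plus_INR; ring).
  rewrite plus_INR, !INR_floor_sum by exact Hq.
  replace (INR k ^ 2) with (INR (k * k)) by (rewrite mult_INR; ring).
  replace (INR k - 1) with (INR (k - 1)) by (rewrite minus_INR by lia; reflexivity).
  replace (2 * INR k - 1) with (INR (k + k - 1))
    by (rewrite minus_INR, plus_INR by lia; simpl; ring).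
  rewrite !fl_INR_div by exact Hq; rewrite <- !INR_IZR_INZ, plus_INR.
  field.
Qed.

Lemma termO_level p k l : (1 <= k)%nat -> (3 <= p ^ l)%nat -> Nat.odd (p ^ l) = true ->
  termO p k l = INR (tri k / p ^ l + floor_sum (p ^ l) k)%nat
                - INR (sumN (fun m => 2 * m / p ^ l)%nat k).
Proof.
  intros Hk Hq3 Hodd; unfold termO; cbv zeta; rewrite <- (pow_INR p l).
  set (q := (p ^ l)%nat) in *.
  destruct (proj1 (Nat.odd_spec q) Hodd) as [t Ht].
  rewrite (sumN_div_double_odd q t k Ht), !plus_INR, (INR_floor_sum q (k + t)) by lia.
  replace (/ 2 * INR k * (INR k - 1)) with (INR (tri k)) by (rewrite INR_tri; field).
  rewrite fl_INR_div, (fl2_odd q t k Ht), <- !INR_IZR_INZ by lia.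
  replace (INR q) with (2 * INR t + 1) by (rewrite Ht, plus_INR, mult_INR; simpl; ring).
  rewrite plus_INR; field.
Qed.

Lemma is_series_INR_sub (a b : nat -> nat) L :
  (forall n, (L <= n)%nat -> a n = 0%nat /\ b n = 0%nat) ->
  is_series (fun n => INR (a n) - INR (b n)) (INR (sumN a L) - INR (sumN b L)).
Proof.
  intros Hab.
  assert (Hsum : forall n, sum_n (fun n => INR (a n) - INR (b n)) n
                           = INR (sumN a (S n)) - INR (sumN b (S n))).
  { induction n as [|n IH]; [rewrite sum_O; simpl; ring|].
    rewrite sum_Sn, IH.
    change (sumN a (S (S n))) with (sumN a (S n) + a (S n))%nat.
    change (sumN b (S (S n))) with (sumN b (S n) + b (S n))%nat.
    rewrite !plus_INR; unfold plus; simpl; ring. }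
  change (is_lim_seq (sum_n (fun n => INR (a n) - INR (b n)))
                     (INR (sumN a L) - INR (sumN b L))).
  apply is_lim_seq_ext_loc with (fun _ => INR (sumN a L) - INR (sumN b L));
    [|apply is_lim_seq_const].
  exists L; intros n Hn; rewrite Hsum.
  rewrite (sumN_eventually_const a L (S n)), (sumN_eventually_const b L (S n));
    try (intros; apply Hab; lia); [reflexivity|lia..].
Qed.

Lemma div_pow_S_eq0 p x n : (2 <= p)%nat -> (x <= n)%nat -> (x / p ^ S n = 0)%nat.
Proof.
  intros Hp Hx; apply Nat.div_small.
  assert (H := Nat.pow_gt_lin_r p (S n) ltac:(lia)); lia.
Qed.

Lemma series_U p k : prime (Z.of_nat p) -> (1 <= k)%nat ->
  is_series (fun n => termU p k (S n))
            (INR (prime.logn p (num_U k)) - INR (prime.logn p (den_U k))).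
Proof.
  intros Hp Hk; assert (Hp2 := prime_ge_2 _ Hp).
  set (L := (k * k + 2 * k)%nat).
  unfold num_U, den_U.
  rewrite Legendre.logn_mul by (apply lt_O_fact || apply (prodN_fact_gt0 (fun i => i))).
  rewrite (Legendre.logn_fact_sumN p (k * k) L), (logn_prod_fact p (fun i => i) k L),
    (logn_prod_fact p (fun i => i + k)%nat k L), <- sumN_add by (auto; lia || (intros; nia)).
  apply is_series_ext with (fun n => INR (k * k / p ^ S n + floor_sum (p ^ S n) k)
                                     - INR (sumN (fun i => (i + k) / p ^ S n)%nat k)).
  { intros n; symmetry; apply termU_level; lia. }
  apply is_series_INR_sub; intros n Hn.
  unfold floor_sum; rewrite div_pow_S_eq0, !sumN_eq0 by (intros; try apply div_pow_S_eq0; lia).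
  split; reflexivity.
Qed.

Lemma series_O p k : prime (Z.of_nat p) -> Nat.odd p = true -> (1 <= k)%nat ->
  is_series (fun n => termO p k (S n))
            (INR (prime.logn p (num_O k)) - INR (prime.logn p (den_O k))).
Proof.
  intros Hp Hodd Hk; assert (Hp2 := prime_ge_2 _ Hp).
  assert (Hp3 : (3 <= p)%nat) by (destruct (Nat.eq_dec p 2) as [->|]; [discriminate|lia]).
  set (L := (tri k + 2 * k)%nat).
  assert (Hp_ne2 : p <> 2%nat) by lia.
  assert (F1 := lt_O_fact (tri k)).
  assert (F2 := prodN_fact_gt0 (fun i => i) k).
  assert (F3 := prodN_fact_gt0 (fun i => 2 * i)%nat k).
  assert (F4 : (0 < 2 ^ (tri k + k))%nat) by (apply Nat.neq_0_lt_0, Nat.pow_nonzero; lia).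
  unfold num_O, den_O.
  rewrite !Legendre.logn_mul by nia.
  change (prime.logn p 2) with (prime.logn p (2 ^ 1)).
  rewrite !Legendre.logn_pow2, Nat.add_0_r, Nat.add_0_l by assumption.
  rewrite (Legendre.logn_fact_sumN p (tri k) L), (logn_prod_fact p (fun i => i) k L),
    (logn_prod_fact p (fun i => 2 * i)%nat k L), <- sumN_add by (auto; lia || (intros; lia)).
  apply is_series_ext with (fun n => INR (tri k / p ^ S n + floor_sum (p ^ S n) k)
                                     - INR (sumN (fun m => 2 * m / p ^ S n)%nat k)).
  { intros n; symmetry; apply termO_level; [lia| |now rewrite Nat.odd_pow].
    apply (Nat.le_trans _ (p ^ 1)); [simpl; lia|apply Nat.pow_le_mono_r; lia]. }
  apply is_series_INR_sub; intros n Hn.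
  unfold floor_sum; rewrite div_pow_S_eq0, !sumN_eq0 by (intros; try apply div_pow_S_eq0; lia).
  split; reflexivity.
Qed.

Theorem proposition5p4 (p k : nat) :
  prime (Z.of_nat p) -> Nat.odd p = true -> (0 < k)%nat ->
  (exists vU : Z, vp_is p (g_U (INR k)) vU /\
     is_series (fun n => termU p k (S n)) (IZR vU)) /\
  (exists vO : Z, vp_is p (g_O (INR k)) vO /\
     is_series (fun n => termO p k (S n)) (IZR vO)).
Proof.
  intros Hp Hodd Hk; destruct (num_den_gt0 k) as (HnU & HdU & HnO & HdO); split.
  - apply (vp_is_of_series p (num_U k) (den_U k)); auto using g_U_value, series_U.
  - apply (vp_is_of_series p (num_O k) (den_O k)); auto using g_O_value, series_O.
Qed.
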